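(* Let $\mathcal K$ (UAVs) and $\mathcal I$ (subscribers) be finite sets. Fix $\sigma^2>0$, channel gains $h_{ij}>0$ ($i\in\mathcal I$, $j\in\mathcal K$), association indicators $c_{ik}\in\{0,1\}$ with $\sum_{k}c_{ik}\le1$ for all $i$ and $\sum_i c_{ik}\le 1$ for all $k$, constants $L>0$, $B>0$, $V\rho_1\ge 0$, nonnegative weights $a_i$ ($i\in\mathcal I$) and $w_k$ ($k\in\mathcal K$), and power bounds $0\le p^{\min}_k$, $p^c_k\ge 0$, $\hat p_k$. For $p=(p_k)_{k\in\mathcal K}$ let $$r_i(p)=\sum_{k\in\mathcal K}c_{ik}\log_2\Big(1+\frac{p_kh_{ik}}{\sigma^2+\sum_{j\in\mathcal K\setminus\{k\}}p_jh_{ij}}\Big),$$ and let $\mathcal F=\{p:\ p^{\min}_k\le p_k\le \hat p_k-p^c_k\ \forall k\}$. Problem (P): minimize over $p\in\mathcal F$ the function $\Phi(p)=\sum_{k}w_kp_k+V\rho_1\sum_{i}\frac{L}{B\,r_i(p)}-\sum_i a_i r_i(p)$ (with $L/(B\cdot 0)=+\infty$); let $\mathrm{OPT}_P=\inf_{p\in\mathcal F}\Phi(p)$. Fix a local point $p^{(r)}\ge 0$ and define $\hat\Lambda_i(p)=\log_2(\sigma^2+\sum_{j}p_jh_{ij})$, $F^{(r)}_{ik}=\log_2(\sigma^2+\sum_{j\ne k}p^{(r)}_jh_{ij})$, $G^{(r)}_{ikj}=h_{ij}/\big((\sigma^2+\sum_{l\ne k}p^{(r)}_lh_{il})\ln2\big)$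 for $j\ne k$. Problem (C): maximize over $(p,\xi,\eta)$, $\xi=(\xi_i)_{i\in\mathcal I}$, $\eta=(\eta_i)_{i\in\mathcal I}$, the objective $-\sum_k w_kp_k+\sum_i a_i\eta_i-V\rho_1\sum_i\xi_i$ subject to: $p\in\mathcal F$; $\xi_i\ge0,\ \eta_i\ge 0$ and $\xi_i\eta_i\ge L/B$ for all $i$; and for all $i$, $$\sum_{k}c_{ik}\big(\hat\Lambda_i(p)-F^{(r)}_{ik}\big)-\sum_k c_{ik}\sum_{j\ne k}G^{(r)}_{ikj}(p_j-p^{(r)}_j)\ge\eta_i .$$ Let $\mathrm{OPT}_C$ be the supremum of the objective of (C) over its feasible set ($-\infty$ if infeasible). Then $\mathrm{OPT}_P\le -\mathrm{OPT}_C$, i.e., the negative of the optimal value of (C) is an upper bound on the optimal value of (P).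
   Context: Problem (P) is the per-slot UAV transmit-power subproblem of a Lyapunov drift-plus-penalty scheme for multi-UAV video transmission: in the paper $w_k=V\rho_2+[Y_k(t)]^+$ and $a_i=[X_i(t)]^++[Z_i(t)]^+$ with $V,\rho_1,\rho_2\ge0$ and $[x]^+=\max\{x,0\}$, $L$ is the video data length per slot and $B$ the bandwidth; $r_i(p)$ is the achievable rate of subscriber $i$ under the fixed association $c$ and fixed UAV positions (encoded in $h_{ij}$). *)

From HB Require Import structures.
From mathcomp Require Import all_boot all_order all_algebra.
From mathcomp Require Import all_classical all_reals all_analysis.
Set Implicit Arguments. Unset Strict Implicit. Unset Printing Implicit Defensive.
Import Order.TTheory GRing.Theory Num.Theory.
Local Open Scope ring_scope.
Local Open Scope classical_set_scope.

Section UAV.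
Variables (R : realType) (K I : finType).

Definition log2 (x : R) : R := ln x / ln 2.

Definition rate (sigma2 : R) (h : I -> K -> R) (c : I -> K -> R)
  (p : K -> R) (i : I) : R :=
  \sum_(k : K) c i k *
    log2 (1 + p k * h i k / (sigma2 + \sum_(j : K | j != k) p j * h i j)).

Definition feasP (pmin pc phat : K -> R) (p : K -> R) : Prop :=
  forall k, pmin k <= p k <= phat k - pc k.

Definition delay_term (L B r : R) : \bar R :=
  if r == 0 then +oo%E else (L / (B * r))%:E.

Definition PhiP (sigma2 : R) (h c : I -> K -> R) (L B Vrho1 : R)
  (a : I -> R) (w : K -> R) (p : K -> R) : \bar R :=
  ((\sum_(k : K) w k * p k)%:E
   + Vrho1%:E * (\sum_(i : I) delay_term L B (rate sigma2 h c p i))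
   - (\sum_(i : I) a i * rate sigma2 h c p i)%:E)%E.

Definition OPT_P sigma2 h c L B Vrho1 a w (pmin pc phat : K -> R) : \bar R :=
  ereal_inf [set PhiP sigma2 h c L B Vrho1 a w p | p in feasP pmin pc phat].

Definition LamHat (sigma2 : R) (h : I -> K -> R) (p : K -> R) (i : I) : R :=
  log2 (sigma2 + \sum_(j : K) p j * h i j).

Definition Fr (sigma2 : R) (h : I -> K -> R) (pr : K -> R) (i : I) (k : K) : R :=
  log2 (sigma2 + \sum_(j : K | j != k) pr j * h i j).

Definition Gr (sigma2 : R) (h : I -> K -> R) (pr : K -> R) (i : I) (k j : K) : R :=
  h i j / ((sigma2 + \sum_(l : K | l != k) pr l * h i l) * ln 2).

Definition objC (Vrho1 : R) (a : I -> R) (w : K -> R)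
  (p : K -> R) (xi eta : I -> R) : R :=
  - (\sum_(k : K) w k * p k) + \sum_(i : I) a i * eta i
  - Vrho1 * \sum_(i : I) xi i.

Definition feasC (sigma2 : R) (h c : I -> K -> R) (L B : R)
  (pmin pc phat pr : K -> R) (p : K -> R) (xi eta : I -> R) : Prop :=
  feasP pmin pc phat p /\
  (forall i, 0 <= xi i /\ 0 <= eta i /\ L / B <= xi i * eta i) /\
  (forall i,
     eta i <= \sum_(k : K) c i k * (LamHat sigma2 h p i - Fr sigma2 h pr i k)
              - \sum_(k : K) c i k *
                  \sum_(j : K | j != k) Gr sigma2 h pr i k j * (p j - pr j)).

Definition OPT_C sigma2 h c L B Vrho1 a w (pmin pc phat pr : K -> R) : \bar R :=
  ereal_sup [set (objC Vrho1 a w x.1.1 x.1.2 x.2)%:E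
            | x in [set x : (K -> R) * (I -> R) * (I -> R) |
                    feasC sigma2 h c L B pmin pc phat pr x.1.1 x.1.2 x.2]].

End UAV.

From HB Require Import structures.
From mathcomp Require Import all_boot all_order all_algebra.
From mathcomp Require Import all_classical all_reals all_analysis.
From mathcomp Require Import ring lra.
Set Implicit Arguments. Unset Strict Implicit. Unset Printing Implicit Defensive.
Import Order.TTheory GRing.Theory Num.Theory.
Local Open Scope ring_scope.

(* Problem (C) is the successive convex approximation of (P) at p^(r): its
   constraint replaces the concave-minus-concave rate by the concave part minus
   the tangent of the subtracted interference term, and since log is concave
   that tangent lies above it, so every feasible eta_i is at most r_i(p).  The
   constraint xi_i eta_i >= L/B then gives L/(B r_i(p)) <= xi_i, hence
   Phi(p) <= -objC(p, xi, eta) for every feasible point of (C), which is the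
   claim after taking the infimum and the supremum. *)

Lemma ln_le_tangent (R : realType) (x y : R) :
  0 < x -> 0 < y -> ln x <= ln y + (x - y) / y.
Proof.
move=> x0 y0; have yN0 : y != 0 by rewrite gt_eqF.
have xy : x / y = 1 + (x - y) / y by field.
have -> : ln x = ln y + ln (x / y).
  by rewrite ln_div ?posrE //; ring.
rewrite lerD2l xy le_ln1Dx // -(@ltrD2l _ 1) addrN -xy divr_gt0 //.
Qed.

Lemma log2_le_tangent (R : realType) (x y : R) :
  0 < x -> 0 < y -> log2 x <= log2 y + (x - y) / (y * ln 2).
Proof.
move=> x0 y0; have ln2_gt0 : 0 < ln (2 : R) by rewrite ln_gt0 // ltr1n.
rewrite /log2 invfM mulrA -mulrDl ler_pM2r ?invr_gt0 //.
exact: ln_le_tangent.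
Qed.

Section SCA.
Variables (R : realType) (K I : finType) (sigma2 : R) (h : I -> K -> R).
Hypothesis hsigma : 0 < sigma2.
Hypothesis hh : forall i j, 0 < h i j.

Definition noise_interf (p : K -> R) (i : I) (k : K) : R :=
  sigma2 + \sum_(j : K | j != k) p j * h i j.

Lemma noise_interf_gt0 p i k : (forall j, 0 <= p j) -> 0 < noise_interf p i k.
Proof.
move=> p0; apply: ltr_pwDl => //; apply: sumr_ge0 => j _.
by rewrite mulr_ge0 // ltW.
Qed.

Lemma LamHat_noise_interf p i k :
  LamHat sigma2 h p i = log2 (noise_interf p i k + p k * h i k).
Proof. by rewrite /LamHat (bigD1 k) //= /noise_interf addrCA addrC. Qed.

Lemma sum_Gr_mul_sub pr p i k : (forall j, 0 <= pr j) ->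
  \sum_(j : K | j != k) Gr sigma2 h pr i k j * (p j - pr j)
  = (noise_interf p i k - noise_interf pr i k) / (noise_interf pr i k * ln 2).
Proof.
move=> pr0; have Sr_neq0 := gt_eqF (noise_interf_gt0 i k pr0).
have ln2_neq0 : ln (2 : R) != 0 by rewrite gt_eqF // ln_gt0 // ltr1n.
rewrite /noise_interf opprD addrACA subrr add0r -sumrB mulr_suml.
apply: eq_bigr => j _; rewrite /Gr -/(noise_interf pr i k); field.
by rewrite Sr_neq0 ln2_neq0.
Qed.

Lemma sca_term_le_log2_sinr p pr i k :
  (forall j, 0 <= p j) -> (forall j, 0 <= pr j) ->
  LamHat sigma2 h p i - Fr sigma2 h pr i k
    - \sum_(j : K | j != k) Gr sigma2 h pr i k j * (p j - pr j)
  <= log2 (1 + p k * h i k / noise_interf p i k).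
Proof.
move=> p0 pr0; set S := noise_interf p i k; set Sr := noise_interf pr i k.
have S_gt0 : 0 < S by exact: noise_interf_gt0.
have Sr_gt0 : 0 < Sr by exact: noise_interf_gt0.
have pk_ge0 : 0 <= p k * h i k by rewrite mulr_ge0 // ltW.
have -> : 1 + p k * h i k / S = (S + p k * h i k) / S by field; rewrite gt_eqF.
have -> : log2 ((S + p k * h i k) / S) = log2 (S + p k * h i k) - log2 S.
  by rewrite /log2 ln_div ?posrE ?mulrBl //; lra.
rewrite (LamHat_noise_interf _ _ k) sum_Gr_mul_sub // -/S -/Sr.
have := log2_le_tangent S_gt0 Sr_gt0; rewrite /Fr -/(noise_interf pr i k) -/Sr.
lra.
Qed.

Lemma sca_surrogate_le_rate c p pr i :
  (forall k, 0 <= c i k) -> (forall j, 0 <= p j) -> (forall j, 0 <= pr j) ->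
  \sum_(k : K) c i k * (LamHat sigma2 h p i - Fr sigma2 h pr i k)
  - \sum_(k : K) c i k * \sum_(j : K | j != k) Gr sigma2 h pr i k j * (p j - pr j)
  <= rate sigma2 h c p i.
Proof.
move=> c0 p0 pr0; rewrite -sumrB /rate; apply: ler_sum => k _.
by rewrite -mulrBr ler_wpM2l // sca_term_le_log2_sinr.
Qed.

End SCA.

Lemma delay_term_le (R : realType) (L B r xi eta : R) :
  0 < L -> 0 < B -> L / B <= xi * eta -> 0 <= eta <= r ->
  (delay_term L B r <= xi%:E)%E.
Proof.
move=> L0 B0 LB /andP[eta0 eta_r].
have LB0 : 0 < L / B by rewrite divr_gt0.
have eta_gt0 : 0 < eta.
  by rewrite lt_def eta0 andbT; apply: contraTneq LB => ->; rewrite mulr0 -ltNge.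
have xi0 : 0 <= xi.
  by rewrite -(pmulr_lge0 _ eta_gt0); apply: le_trans LB; exact: ltW.
have r_gt0 := lt_le_trans eta_gt0 eta_r.
rewrite /delay_term gt_eqF // lee_fin invfM mulrA ler_pdivrMr //.
by apply: le_trans LB _; rewrite ler_wpM2l.
Qed.

Lemma PhiP_le_objC (R : realType) (K I : finType) (sigma2 : R)
  (h c : I -> K -> R) (L B Vrho1 : R) (a : I -> R) (w : K -> R)
  (pmin pc phat pr p : K -> R) (xi eta : I -> R) :
  0 < sigma2 -> (forall i j, 0 < h i j) -> (forall i k, 0 <= c i k) ->
  0 < L -> 0 < B -> 0 <= Vrho1 -> (forall i, 0 <= a i) ->
  (forall k, 0 <= pmin k) -> (forall k, 0 <= pr k) ->
  feasC sigma2 h c L B pmin pc phat pr p xi eta ->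
  (PhiP sigma2 h c L B Vrho1 a w p <= - (objC Vrho1 a w p xi eta)%:E)%E.
Proof.
move=> hsigma hh c0 L0 B0 V0 a0 pmin0 pr0 [hp [hxieta heta]].
have p0 k : 0 <= p k by case/andP: (hp k) => + _; exact: le_trans.
have eta_le_rate i : eta i <= rate sigma2 h c p i.
  by apply: le_trans (heta i) _; apply: sca_surrogate_le_rate.
have delay_le i : (delay_term L B (rate sigma2 h c p i) <= (xi i)%:E)%E.
  have [_ [eta0 LB]] := hxieta i.
  by apply: (delay_term_le L0 B0 LB); rewrite eta0 eta_le_rate.
have delay_sum : (Vrho1%:E * \sum_(i : I) delay_term L B (rate sigma2 h c p i)
                  <= (Vrho1 * \sum_(i : I) xi i)%:E)%E.
  by rewrite EFinM -sumEFin lee_wpmul2l ?lee_fin // lee_sum.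
have reward_sum : ((\sum_(i : I) a i * eta i)%:E
                   <= (\sum_(i : I) a i * rate sigma2 h c p i)%:E)%E.
  by rewrite lee_fin; apply: ler_sum => i _; rewrite ler_wpM2l.
apply: le_trans (leeB (leeD2l _ delay_sum) reward_sum) _.
by rewrite -!EFinN -!EFinD lee_fin /objC; lra.
Qed.

Theorem lemma1 (R : realType) (K I : finType)
  (sigma2 : R) (h c : I -> K -> R) (L B Vrho1 : R)
  (a : I -> R) (w : K -> R) (pmin pc phat pr : K -> R)
  (hsigma : 0 < sigma2)
  (hh : forall i j, 0 < h i j)
  (hc01 : forall i k, c i k = 0 \/ c i k = 1)
  (hcI : forall i, \sum_(k : K) c i k <= 1)
  (hcK : forall k, \sum_(i : I) c i k <= 1)
  (hL : 0 < L) (hB : 0 < B) (hV : 0 <= Vrho1)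
  (ha : forall i, 0 <= a i) (hw : forall k, 0 <= w k)
  (hpmin : forall k, 0 <= pmin k) (hpc : forall k, 0 <= pc k)
  (hpr : forall k, 0 <= pr k) :
  (OPT_P sigma2 h c L B Vrho1 a w pmin pc phat
   <= - OPT_C sigma2 h c L B Vrho1 a w pmin pc phat pr)%E.
Proof.
have c0 i k : 0 <= c i k by case: (hc01 i k) => ->.
rewrite /OPT_P /OPT_C leeNr; apply: ge_ereal_sup => _ [[[p xi] eta] /= feas <-].
rewrite leeNr; apply: ge_ereal_inf; exists (PhiP sigma2 h c L B Vrho1 a w p).
  by exists p; first by case: feas.
exact: PhiP_le_objC hsigma hh c0 hL hB hV ha hpmin hpr feas.
Qed.
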